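(* Let $\Phi = \{\xi = (\tau_L,\delta_L,\tau_R,\delta_R) \in \mathbb{R}^4 : \tau_L > |\delta_L + 1|,\ \tau_R < -|\delta_R+1|\}$, $\Phi^{(1)} = \{\xi \in \Phi : \delta_L > 0, \delta_R > 0\}$, $\Phi^{(2)} = \{\xi \in \Phi : \delta_L < 0, \delta_R < 0\}$. Let $\alpha(\xi) = \tau_L\tau_R + (\delta_L-1)(\delta_R-1)$, $g(\xi) = (\tau_R^2 - 2\delta_R,\ \delta_R^2,\ \tau_L\tau_R - \delta_L - \delta_R,\ \delta_L\delta_R)$, and for $\xi\in\Phi$ $$\phi^+(\xi) = \delta_R - \big(\tau_R + \delta_L + \delta_R - (1+\tau_R)\lambda_L^u\big)\lambda_L^u,$$ where $\lambda_L^u > 1$ is the eigenvalue of $\begin{bmatrix}\tau_L & 1\\ -\delta_L & 0\end{bmatrix}$ of modulus greater than one. Define, for $n \ge 0$, $$\mathcal{R}^{(1)}_n = \{\xi \in \Phi^{(1)} : \phi^+(g^n(\xi)) > 0,\ \phi^+(g^{n+1}(\xi)) \le 0\},$$ and for $n \ge 1$, $$\mathcal{R}^{(2)}_n = \{\xi \in \Phi^{(2)} : \phi^+(g^n(\xi)) > 0,\ \phi^+(g^{n+1}(\xi)) \le 0,\ \alpha(\xi) < 0\}.$$ If $\xi \in \mathcal{R}^{(2)}_n$ with $n \ge 1$, then $g(\xi) \in \mathcal{R}^{(1)}_{n-1}$.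
   Context: $g^n$ denotes the $n$-fold composition of $g$; the conditions in the set definitions are understood to include that the relevant iterates $g^k(\xi)$ lie in $\Phi$, so that $\phi^+$ is defined at them. *)

From Stdlib Require Import Reals.
Open Scope R_scope.

Record xi4 : Type := mkXi { tL : R; dL : R; tR : R; dR : R }.

Definition inPhi (x : xi4) : Prop :=
  tL x > Rabs (dL x + 1) /\ tR x < - Rabs (dR x + 1).

Definition inPhi1 (x : xi4) : Prop := inPhi x /\ dL x > 0 /\ dR x > 0.
Definition inPhi2 (x : xi4) : Prop := inPhi x /\ dL x < 0 /\ dR x < 0.

Definition alpha (x : xi4) : R := tL x * tR x + (dL x - 1) * (dR x - 1).

Definition g (x : xi4) : xi4 :=
  mkXi (tR x ^ 2 - 2 * dR x) (dR x ^ 2)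
       (tL x * tR x - dL x - dR x) (dL x * dR x).

(* Eigenvalue of [[tau_L, 1], [-delta_L, 0]] of modulus > 1, i.e. the larger
   root of lambda^2 - tau_L lambda + delta_L (real and > 1 on Phi). *)
Definition lambdaLu (x : xi4) : R :=
  (tL x + sqrt (tL x ^ 2 - 4 * dL x)) / 2.

Definition phi_plus (x : xi4) : R :=
  dR x - (tR x + dL x + dR x - (1 + tR x) * lambdaLu x) * lambdaLu x.

Definition giter (n : nat) (x : xi4) : xi4 := Nat.iter n g x.

Definition inR1 (n : nat) (x : xi4) : Prop :=
  inPhi1 x /\ inPhi (giter n x) /\ inPhi (giter (S n) x) /\
  phi_plus (giter n x) > 0 /\ phi_plus (giter (S n) x) <= 0.

Definition inR2 (n : nat) (x : xi4) : Prop :=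
  inPhi2 x /\ inPhi (giter n x) /\ inPhi (giter (S n) x) /\
  phi_plus (giter n x) > 0 /\ phi_plus (giter (S n) x) <= 0 /\ alpha x < 0.

(* The iterate conditions defining R^(2)_n at xi are literally those of
   R^(1)_(n-1) at g(xi), since g^k(g xi) = g^(k+1) xi.  It remains to see that
   g(xi) lies in Phi^(1).  For g(xi) the margin tau_L - |delta_L + 1| equals
   tau_R^2 - (delta_R + 1)^2 > 0, and, as delta_L delta_R > 0, the margin
   tau_R + |delta_R + 1| equals alpha(xi) < 0. *)

From Stdlib Require Import Reals Lra Psatz.
Open Scope R_scope.

Lemma giter_g (k : nat) (x : xi4) : giter k (g x) = giter (S k) x.
Proof. unfold giter. symmetry. apply Nat.iter_succ_r. Qed.

Lemma tL_g_sub_Rabs (x : xi4) :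
  tL (g x) - Rabs (dL (g x) + 1) = tR x ^ 2 - (dR x + 1) ^ 2.
Proof.
  simpl. rewrite Rabs_right by nra. ring.
Qed.

Lemma tR_g_add_Rabs (x : xi4) :
  -1 <= dL x * dR x -> tR (g x) + Rabs (dR (g x) + 1) = alpha x.
Proof.
  intros HdLR. unfold alpha; simpl. rewrite Rabs_right by lra. ring.
Qed.

Lemma g_inPhi1 (x : xi4) :
  Rabs (dR x + 1) < Rabs (tR x) -> 0 < dL x * dR x -> alpha x < 0 ->
  inPhi1 (g x).
Proof.
  intros HtR HdLR Halpha.
  assert (Hsq : (dR x + 1) ^ 2 < tR x ^ 2).
  { rewrite <- (pow2_abs (dR x + 1)), <- (pow2_abs (tR x)).
    pose proof (Rabs_pos (dR x + 1)). nra. }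
  assert (HdR : dR x <> 0) by (intros H0; rewrite H0 in HdLR; lra).
  pose proof (tL_g_sub_Rabs x) as HtL.
  pose proof (tR_g_add_Rabs x ltac:(lra)) as HtRg.
  unfold inPhi1, inPhi.
  split; [split; lra |].
  simpl. split; [nra | lra].
Qed.

Lemma inPhi2_g_inPhi1 (x : xi4) : inPhi2 x -> alpha x < 0 -> inPhi1 (g x).
Proof.
  intros [[_ HtR] [HdL HdR]] Halpha.
  apply g_inPhi1; [| nra | exact Halpha].
  rewrite (Rabs_left (tR x)) by (pose proof (Rabs_pos (dR x + 1)); lra).
  lra.
Qed.

Theorem proposition7p1 (n : nat) (x : xi4) :
  (1 <= n)%nat -> inR2 n x -> inR1 (n - 1) (g x).
Proof.
  intros Hn (Hphi2 & Hin & HinS & Hpos & Hnpos & Halpha).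
  destruct n as [|m]; [inversion Hn |].
  rewrite Nat.sub_1_r. simpl Nat.pred.
  unfold inR1. rewrite !giter_g.
  auto using inPhi2_g_inPhi1.
Qed.
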